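(* Let $Y$ be a set, $X$ a real vector space, $K$ a compact topological space and $(\Omega,\Sigma,\nu)$ a measure space. Let $\mathcal H$ be a set of functions $\Omega\to X$ with $\alpha\mathcal H=\mathcal H$ for all $\alpha\in\mathbb R$, and let $\mathcal F$ be a set of maps $X\to Y$. Let $S:\mathcal F\times\mathcal H\to\{\text{measurable functions }\Omega\to\mathbb R\}$ and $R:\mathcal H\times K\to\{\text{measurable functions }\Omega\to\mathbb R\}$ satisfy $$|\alpha S(u,f)|=|S(u,\alpha f)|,\qquad |\alpha R(f,k)|=|R(\alpha f,k)|$$ for all $\alpha\in\mathbb R$, $u\in\mathcal F$, $f\in\mathcal H$, $k\in K$. Suppose that for all $1\le r<s<\infty$ there is a constant $C_{s,r}$ with $\|h\|_{L_s(\nu)}\le C_{s,r}\|h\|_{L_r(\nu)}$ for all measurable $h$. Let $1\le p_1\le p_2<\infty$ and $1\le q_1\le q_2<\infty$ with $$\frac1{p_1}-\frac1{p_2}\le \frac1{q_1}-\frac1{q_2}.$$ Then $RS(q_1,p_1)\subseteq RS(q_2,p_2)$.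
   Context: For $g:\Omega\to\mathbb R$, $f\in\mathcal H$ and $w\in\Omega$, $g(w)f\in\mathcal H$ denotes the scalar multiple of the function $f$ by the number $g(w)$, and $S(u,g(w)f)(w)$ denotes the value at the point $w$ of the function $S(u,g(w)f)$ (similarly for $R$). For $1\le q,p<\infty$, a map $u\in\mathcal F$ is called $(q,p)$-$RS$ summing if there is a constant $C>0$ such that $$\Big(\int_\Omega |S(u,g(w)f)(w)|^q\,d\nu(w)\Big)^{1/q}\le C\sup_{k\in K}\Big(\int_\Omega |R(g(w)f,k)(w)|^p\,d\nu(w)\Big)^{1/p}$$ for all $f\in\mathcal H$ and all $g\in\mathcal L_q(\nu)$. $RS(q,p)$ denotes the class of all $(q,p)$-$RS$ summing maps. *)

From HB Require Import structures.
From mathcomp Require Import all_boot all_order all_algebra.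
From mathcomp Require Import all_classical all_reals all_analysis.
Set Implicit Arguments. Unset Strict Implicit. Unset Printing Implicit Defensive.
Import Order.TTheory GRing.Theory Num.Theory.
Import numFieldNormedType.Exports.
Local Open Scope classical_set_scope.
Local Open Scope ring_scope.

Definition in_Lq {d} {T : measurableType d} {R : realType}
  (nu : {measure set T -> \bar R}) (q : R) (g : T -> R) : Prop :=
  measurable_fun [set: T] g /\ finite_norm nu q%:E g.

Definition RS_summing {R : realType} {X : lmodType R} {Y : Type} {K : Type}
  {d} {T : measurableType d} (nu : {measure set T -> \bar R})
  (H : set (T -> X)) (F : set (X -> Y))
  (S : (X -> Y) -> (T -> X) -> T -> R) (Rm : (T -> X) -> K -> T -> R)
  (q p : R) (u : X -> Y) : Prop :=
  F u /\
  exists C : R, 0 < C /\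
    forall (f : T -> X) (g : T -> R), H f -> in_Lq nu q g ->
      (Lnorm nu q%:E (EFin \o (fun w => S u (g w *: f) w))
       <= C%:E * ereal_sup [set Lnorm nu p%:E (EFin \o (fun w => Rm (g w *: f) k w))
                           | k in [set: K]])%E.

Definition RS {R : realType} {X : lmodType R} {Y : Type} {K : Type}
  {d} {T : measurableType d} (nu : {measure set T -> \bar R})
  (H : set (T -> X)) (F : set (X -> Y))
  (S : (X -> Y) -> (T -> X) -> T -> R) (Rm : (T -> X) -> K -> T -> R)
  (q p : R) : set (X -> Y) :=
  [set u | RS_summing nu H F S Rm q p u].

From HB Require Import structures.
From mathcomp Require Import all_boot all_order all_algebra.
From mathcomp Require Import all_classical all_reals all_analysis.
From mathcomp Require Import measurable_realfun ring lra.
Import Order.TTheory GRing.Theory Num.Theory Num.Def.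
Import numFieldNormedType.Exports.
Local Open Scope classical_set_scope.
Local Open Scope ring_scope.

(* Let u be (q1,p1)-summing with constant C and write a = S(u,f), b_k = R(f,k); by homogeneity
   the summing inequalities only involve the products g a and g b_k.  Given g in L_q2, let
   m = |g| min(|a|, n), th = q2/q1 - 1 and 1/s = 1/q1 - 1/q2, and test the (q1,p1) inequality
   against g m^th.  Its left side is at least N^(th+1), where N = ||m||_q2 is finite thanks to
   the truncation.  On the right, Hoelder with 1/p1 = 1/t + 1/p', where t >= s and p' >= p2
   (possible since 1/p1 - 1/p2 <= 1/s), followed by the norm comparison hypothesis gives
   ||g m^th b_k||_p1 <= C1 ||m^th||_s C2 ||g b_k||_p2 = C1 C2 N^th ||g b_k||_p2.  Cancelling N^th
   bounds N uniformly in n, and monotone convergence bounds ||g a||_q2. *)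

Lemma gt0_lee_poweR2 {R : realType} [r : R] [x y : \bar R] : 0 < r ->
  (0 <= x)%E -> (0 <= y)%E -> (x `^ r <= y `^ r)%E = (x <= y)%E.
Proof.
move=> r0 x0 y0; apply/idP/idP => xy; last first.
  by apply: (gt0_ler_poweR (ltW r0)); rewrite // in_itv/= leey ?andbT.
rewrite -(poweRe1 x0) -(poweRe1 y0) -(divff (lt0r_neq0 r0)) !poweRrM.
by apply: gt0_ler_poweR; rewrite ?invr_ge0 ?(ltW r0)// in_itv/= leey poweR_ge0.
Qed.

Lemma powRD1 {R : realType} (x r : R) : 0 <= x -> r + 1 != 0 ->
  x `^ (r + 1) = x `^ r * x.
Proof. by move=> x0 r1; rewrite powRD ?powRr1// (negbTE r1). Qed.

Lemma powRD1_le_mul_cancel {R : realType} (x c th : R) : 0 <= x -> 0 <= c ->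
  x `^ (th + 1) <= c * x `^ th -> x <= c.
Proof.
move=> x0 c0; have [->|xneq0] := eqVneq x 0; first by [].
rewrite powRD ?xneq0 ?implybT// powRr1// mulrC ler_pM2r//.
by rewrite powR_gt0// lt_def xneq0.
Qed.

Section Lnorm_real.
Context {R : realType} {d} {T : measurableType d} (nu : {measure set T -> \bar R}).
Local Notation "''N_' r [ f ]" := (Lnorm nu r%:E (EFin \o f%R)).

Lemma LnormE_EFin (f : T -> R) (r : R) :
  'N_r[f] = ((\int[nu]_x (`|f x| `^ r)%:E) `^ r^-1)%E.
Proof. by rewrite unlock. Qed.

Lemma eq_Lnorm_abs (f g : T -> R) (r : R) : (forall x, `|f x| = `|g x|) ->
  'N_r[f] = 'N_r[g].
Proof. by move=> fg; rewrite !LnormE_EFin; under eq_integral do rewrite fg. Qed.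

Lemma measurable_powR_norm (f : T -> R) (r : R) : measurable_fun setT f ->
  measurable_fun setT (fun x => `|f x| `^ r).
Proof. by move=> mf; apply: (measurableT_comp (measurable_powR _)); exact: measurableT_comp. Qed.

Lemma le_Lnorm [f g : T -> R] [r : R] : 0 <= r ->
  measurable_fun setT f -> measurable_fun setT g ->
  (forall x, `|f x| <= `|g x|) -> ('N_r[f] <= 'N_r[g])%E.
Proof.
move=> r0 mf mg fg; rewrite !LnormE_EFin.
have int_ge0 (h : T -> R) : (0 <= \int[nu]_x (`|h x| `^ r)%:E)%E.
  by apply: integral_ge0 => x _; rewrite lee_fin powR_ge0.
apply: gt0_ler_poweR; rewrite ?invr_ge0 ?in_itv/= ?leey ?int_ge0//.
eapply ge0_le_integral => //.
- by apply/measurable_EFinP; exact: measurable_powR_norm.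
- by apply/measurable_EFinP; exact: measurable_powR_norm.
- by move=> x _; rewrite lee_fin ge0_ler_powR.
Qed.

Lemma Lnorm_powR_norm (f : T -> R) (s th : R) : s != 0 -> th != 0 ->
  'N_s[(fun x => `|f x| `^ th)] = ('N_(th * s)[f] `^ th)%E.
Proof.
move=> s0 th0; rewrite !LnormE_EFin -poweRrM; congr (_ `^ _)%E.
- by apply: eq_integral => x _; rewrite ger0_norm ?powR_ge0// -powRrM.
- by field; apply/andP.
Qed.

Lemma LnormZ_EFin (f : T -> R) (c r : R) : 0 < r -> measurable_fun setT f ->
  'N_r[(fun x => c * f x)] = (`|c|%:E * 'N_r[f])%E.
Proof.
move=> r0 mf; rewrite !LnormE_EFin.
under eq_integral do rewrite normrM powRM// EFinM.
have pow_ge0 x : [set: T] x -> (0 <= (`|f x| `^ r)%:E)%E.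
  by move=> _; rewrite lee_fin powR_ge0.
rewrite ge0_integralZl_EFin ?powR_ge0//; last first.
  by apply/measurable_EFinP; exact: measurable_powR_norm.
rewrite poweRM ?lee_fin ?powR_ge0 ?integral_ge0//.
by rewrite poweR_EFin -powRrM divff ?gt_eqF// powRr1.
Qed.

Lemma poweR_Lnorm_EFin (f : T -> R) (r : R) : r != 0 ->
  ('N_r[f] `^ r = \int[nu]_x (`|f x| `^ r)%:E)%E.
Proof. exact: powR_Lnorm. Qed.

Lemma hoelder_Lnorm_mul [f g : T -> R] [r a b : R] : 0 < r -> 0 < a -> 0 < b ->
  a^-1 + b^-1 = r^-1 -> measurable_fun setT f -> measurable_fun setT g ->
  ('N_r[f \* g] <= 'N_a[f] * 'N_b[g])%E.
Proof.
move=> r0 a0 b0 abr mf mg.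
have ar0 : 0 < a / r by rewrite divr_gt0.
have br0 : 0 < b / r by rewrite divr_gt0.
have ar_br_conj : (a / r)^-1 + (b / r)^-1 = 1.
  by rewrite !invf_div -mulrDr abr divff ?gt_eqF.
have := hoelder nu (measurable_powR_norm _ r mf) (measurable_powR_norm _ r mg) ar0 br0 ar_br_conj.
have -> : (fun x => `|f x| `^ r) \* (fun x => `|g x| `^ r) = fun x => `|(f \* g) x| `^ r.
  by apply/funext => x; rewrite /= normrM powRM.
rewrite !Lnorm_powR_norm ?gt_eqF// mulr1 !(mulrC r) !divfK ?gt_eqF//.
by rewrite -poweRM ?Lnorm_ge0// gt0_lee_poweR2 ?mule_ge0 ?Lnorm_ge0.
Qed.

Lemma Lnorm_mul_le_trunc (G A : T -> R) (r c : R) : 0 < r ->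
  measurable_fun setT G -> measurable_fun setT A ->
  (forall n : nat, ('N_r[(fun x => `|G x| * minr `|A x| n%:R)] <= c%:E)%E) ->
  ('N_r[G \* A] <= c%:E)%E.
Proof.
move=> r0 mG mA trunc_le.
have c0 : 0 <= c by rewrite -lee_fin; apply: le_trans (trunc_le 0%N); exact: Lnorm_ge0.
pose m n x := `|G x| * minr `|A x| n%:R.
have m_ge0 n x : 0 <= m n x by rewrite mulr_ge0// le_min normr_ge0 ler0n.
have mm n : measurable_fun setT (m n).
  apply: measurable_funM; first exact: measurableT_comp.
  by apply: measurable_minr; [exact: measurableT_comp|exact: measurable_cst].
rewrite -(gt0_lee_poweR2 r0) ?lee_fin ?Lnorm_ge0// poweR_Lnorm_EFin ?gt_eqF// poweR_EFin.
pose phi n x := (`|m n x| `^ r)%:E.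
have mphi n : measurable_fun setT (phi n).
  by apply/measurable_EFinP; exact: measurable_powR_norm.
have phi_ge0 n x : [set: T] x -> (0 <= phi n x)%E by rewrite lee_fin powR_ge0.
have phi_nd x : [set: T] x -> nondecreasing_seq (phi^~ x).
  move=> _ i j ij; rewrite lee_fin !ger0_norm//.
  apply: ge0_ler_powR; rewrite ?nnegrE ?(ltW r0)//.
  by rewrite /m; apply: ler_wpM2l => //; rewrite le_min !ge_min lexx ler_nat ij !orbT.
have phi_cvg x : limn (phi^~ x) = (`|(G \* A) x| `^ r)%:E.
  apply: cvg_lim => //; apply: cvg_near_cst.
  near=> n; rewrite /phi ger0_norm// /m normrM.
  congr ((_ * _) `^ r)%:E; apply/min_idPl.
  near: n; exists (truncn `|A x|).+1 => // n /= hn.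
  by apply: ltW; apply: (lt_le_trans (truncnS_gt _)); rewrite ler_nat.
under eq_integral do rewrite -phi_cvg.
rewrite monotone_convergence//; apply: lime_le.
  apply: ereal_nondecreasing_is_cvgn => i j ij.
  by apply: ge0_le_integral => // x _; [exact: phi_ge0 | exact: phi_nd].
apply: nearW => n; have := trunc_le n.
by rewrite -(gt0_lee_poweR2 r0) ?lee_fin ?Lnorm_ge0// poweR_Lnorm_EFin ?gt_eqF// poweR_EFin.
Unshelve. all: by end_near.
Qed.

End Lnorm_real.

Section Lnorm_dominated.
Context {R : realType} {d} {T : measurableType d} (nu : {measure set T -> \bar R}).

Local Notation "''N_' r [ f ]" := (Lnorm nu r%:E (EFin \o f%R)).

Definition Lnorm_dominated (r s C : R) :=
  forall h : T -> R, measurable_fun setT h -> ('N_s[h] <= C%:E * 'N_r[h])%E.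

Lemma Lnorm_dominated_le [r s : R] :
  (forall r s : R, 1 <= r -> r < s -> exists C, Lnorm_dominated r s C) ->
  1 <= r -> r <= s -> exists2 C, 0 < C & Lnorm_dominated r s C.
Proof.
move=> dom r_ge1; rewrite le_eqVlt => /predU1P[<-|rs].
  by exists 1 => // h _; rewrite mul1e.
have [C domC] := dom r s r_ge1 rs.
exists (Num.max C 1) => [|h mh]; first by rewrite lt_max ltr01 orbT.
apply: le_trans (domC h mh) _; apply: lee_wpmul2r; first exact: Lnorm_ge0.
by rewrite lee_fin le_max lexx.
Qed.

End Lnorm_dominated.

Section summing_inclusion.
Context {R : realType} {d} {T : measurableType d} (nu : {measure set T -> \bar R}).
Local Notation "''N_' r [ f ]" := (Lnorm nu r%:E (EFin \o f%R)).
Context {K : Type} {a : T -> R} {b : K -> T -> R}.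
Context {q1 q2 p1 p2 t p' C C1 C2 : R}.
Hypotheses (q1_gt0 : 0 < q1) (q1_lt_q2 : q1 < q2) (p1_gt0 : 0 < p1)
  (t_gt0 : 0 < t) (p'_gt0 : 0 < p') (tp'_p1 : t^-1 + p'^-1 = p1^-1)
  (C_gt0 : 0 < C) (C1_gt0 : 0 < C1) (C2_gt0 : 0 < C2).
Hypotheses (ma : measurable_fun setT a) (mb : forall k, measurable_fun setT (b k)).
Hypothesis summing : forall g, in_Lq nu q1 g ->
  ('N_q1[g \* a] <= C%:E * ereal_sup [set 'N_p1[g \* b k] | k in [set: K]])%E.
Hypotheses (Lnorm_t_le : Lnorm_dominated nu (q1^-1 - q2^-1)^-1 t C1)
  (Lnorm_p'_le : Lnorm_dominated nu p2 p' C2).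

Let C_ge0 : 0 <= C := ltW C_gt0.
Let C1_ge0 : 0 <= C1 := ltW C1_gt0.
Let C2_ge0 : 0 <= C2 := ltW C2_gt0.

Section truncation.
Context {g : T -> R} {beta : R}.
Hypotheses (mg : measurable_fun setT g) (Lnorm_g_lty : ('N_q2[g] < +oo)%E)
  (beta_ge0 : 0 <= beta) (Lnorm_gb_le : forall k, ('N_p2[g \* b k] <= beta%:E)%E).

Let s := (q1^-1 - q2^-1)^-1.
Let th := q2 / s.
Let trunc (n : nat) x := `|g x| * minr `|a x| n%:R.
Let weight (n : nat) x := `|trunc n x| `^ th.

Let q2_gt0 : 0 < q2. Proof. exact: lt_trans q1_lt_q2. Qed.

Let s_gt0 : 0 < s.
Proof. by rewrite invr_gt0 subr_gt0 ltf_pV2 ?posrE. Qed.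

Let th_gt0 : 0 < th. Proof. exact: divr_gt0. Qed.

Let th_s : th * s = q2. Proof. by rewrite divfK ?gt_eqF. Qed.

Let thD1_q1 : (th + 1) * q1 = q2.
Proof. by rewrite /th /s invrK; field; rewrite (gt_eqF q2_gt0) (gt_eqF q1_gt0). Qed.

Let trunc_ge0 n x : 0 <= trunc n x.
Proof. by rewrite mulr_ge0// le_min normr_ge0 ler0n. Qed.

Let measurable_trunc n : measurable_fun setT (trunc n).
Proof.
apply: measurable_funM; first exact: measurableT_comp.
by apply: measurable_minr; [exact: measurableT_comp|exact: measurable_cst].
Qed.

Let measurable_weight n : measurable_fun setT (weight n).
Proof. exact: measurable_powR_norm. Qed.

Let trunc_le n x : trunc n x <= n%:R * `|g x|.
Proof. by rewrite /trunc mulrC ler_wpM2r// ge_min lexx orbT. Qed.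

Let weight_le n x : weight n x <= n%:R `^ th * `|g x| `^ th.
Proof.
by rewrite /weight -powRM// ger0_norm// ge0_ler_powR ?(ltW th_gt0) ?nnegrE ?mulr_ge0.
Qed.

Lemma Lnorm_trunc_lty n : ('N_q2[trunc n] < +oo)%E.
Proof.
apply: (le_lt_trans (le_Lnorm nu (g := fun x => n%:R * g x) (ltW q2_gt0) (measurable_trunc n) _ _)).
- by apply: measurable_funM => //; exact: measurable_cst.
- by move=> x; rewrite ger0_norm// normrM normr_nat.
by rewrite LnormZ_EFin// lte_mul_pinfty.
Qed.

Lemma Lnorm_g_weight_lty n : ('N_q1[g \* weight n] < +oo)%E.
Proof.
pose bound x := n%:R `^ th * `|g x| `^ (th + 1).
apply: (le_lt_trans (le_Lnorm nu (g := bound) (ltW q1_gt0) (measurable_funM mg (measurable_weight n)) _ _)).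
- by apply: measurable_funM; [exact: measurable_cst|exact: measurable_powR_norm].
- move=> x; rewrite /bound /= normrM [`|weight n x|]ger0_norm ?powR_ge0//.
  rewrite [X in _ <= X]ger0_norm ?mulr_ge0 ?powR_ge0// powRD1 ?gt_eqF ?addr_gt0//.
  by rewrite mulrA [leLHS]mulrC ler_wpM2r// weight_le.
rewrite LnormZ_EFin//; last exact: measurable_powR_norm.
rewrite lte_mul_pinfty//; apply: (@le_lt_trans _ _ ('N_q2[g] `^ (th + 1))%E).
  by rewrite -thD1_q1 -Lnorm_powR_norm ?gt_eqF ?addr_gt0.
exact: poweR_lty.
Qed.

Lemma Lnorm_trunc_powD1_le n :
  ('N_q2[trunc n] `^ (th + 1) <= 'N_q1[(g \* weight n) \* a])%E.
Proof.
rewrite -{1}thD1_q1 -Lnorm_powR_norm ?gt_eqF ?addr_gt0//.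
apply: le_Lnorm (ltW q1_gt0) (measurable_powR_norm _ _ (measurable_trunc n)) _ _.
  exact: measurable_funM (measurable_funM mg (measurable_weight n)) ma.
move=> x; rewrite ger0_norm ?powR_ge0// powRD1 ?gt_eqF ?addr_gt0//.
have -> : `|((g \* weight n) \* a) x| = weight n x * (`|g x| * `|a x|).
  by rewrite /= !normrM [`|weight n x|]ger0_norm ?powR_ge0// mulrCA mulrA.
by rewrite ler_wpM2l ?powR_ge0// ger0_norm// /trunc ler_wpM2l// ge_min lexx.
Qed.

Lemma Lnorm_g_weight_b_le n k :
  ('N_p1[(g \* weight n) \* b k] <= (C1 * C2 * beta)%:E * 'N_q2[trunc n] `^ th)%E.
Proof.
have mgb : measurable_fun setT (g \* b k) by exact: measurable_funM.
rewrite (@eq_Lnorm_abs _ _ _ nu _ (weight n \* (g \* b k)));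
  last by move=> x; rewrite /= mulrCA mulrA.
apply: le_trans (hoelder_Lnorm_mul nu p1_gt0 t_gt0 p'_gt0 tp'_p1 (measurable_weight n) mgb) _.
have Lnorm_weight_le : ('N_t[weight n] <= C1%:E * 'N_q2[trunc n] `^ th)%E.
  by rewrite -th_s -Lnorm_powR_norm ?gt_eqF//; exact: Lnorm_t_le.
have gb_le : ('N_p'[g \* b k] <= (C2 * beta)%:E)%E.
  rewrite EFinM; apply: le_trans; first exact: Lnorm_p'_le mgb.
  by apply: lee_wpmul2l; rewrite ?lee_fin.
apply: le_trans (lee_pmul (Lnorm_ge0 _ _ _) (Lnorm_ge0 _ _ _) Lnorm_weight_le gb_le) _.
by rewrite !EFinM muleAC muleA.
Qed.

Lemma Lnorm_trunc_le n : ('N_q2[trunc n] <= (C * C1 * C2 * beta)%:E)%E.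
Proof.
have sup_le : (ereal_sup [set 'N_p1[(g \* weight n) \* b k] | k in [set: K]]
    <= (C1 * C2 * beta)%:E * 'N_q2[trunc n] `^ th)%E.
  by apply: ge_ereal_sup => _ [k _ <-]; exact: Lnorm_g_weight_b_le.
have : ('N_q2[trunc n] `^ (th + 1)
    <= C%:E * ((C1 * C2 * beta)%:E * 'N_q2[trunc n] `^ th))%E.
  apply: le_trans (Lnorm_trunc_powD1_le n) _.
  apply: le_trans (summing _ (conj (measurable_funM mg (measurable_weight n))
                                (Lnorm_g_weight_lty n))) _.
  by rewrite lee_wpmul2l ?lee_fin.
have /fineK <- : 'N_q2[trunc n] \is a fin_num.
  by rewrite ge0_fin_numE ?Lnorm_ge0 ?Lnorm_trunc_lty.
rewrite !poweR_EFin -!EFinM !lee_fin !mulrA.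
by apply: powRD1_le_mul_cancel; rewrite ?fine_ge0 ?Lnorm_ge0 ?mulr_ge0.
Qed.

Lemma Lnorm_mul_le_bound : ('N_q2[g \* a] <= (C * C1 * C2 * beta)%:E)%E.
Proof. exact: Lnorm_mul_le_trunc q2_gt0 mg ma Lnorm_trunc_le. Qed.

End truncation.

Lemma summing_index_inhabited : exists k : K, True.
Proof.
apply: contrapT => /forallNP noK.
have Lq_0 : in_Lq nu q1 (cst 0).
  by split; [exact: measurable_cst | rewrite /finite_norm Lnorm0 ?ltry// eqe gt_eqF].
have := summing _ Lq_0.
rewrite (_ : [set _ | k in _] = set0) ?ereal_sup0 ?gt0_muleNy ?lte_fin//.
  by rewrite leNgt (lt_le_trans _ (Lnorm_ge0 _ _ _)) ?ltNyr.
by apply/seteqP; split=> // x [k _ _]; exact: (noK k).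
Qed.

Lemma Lnorm_mul_le_sup g : in_Lq nu q2 g ->
  ('N_q2[g \* a] <= (C * C1 * C2)%:E * ereal_sup [set 'N_p2[g \* b k] | k in [set: K]])%E.
Proof.
move=> [mg Lnorm_g_lty]; have [k0 _] := summing_index_inhabited.
set B := ereal_sup _.
have B_ub k : ('N_p2[g \* b k] <= B)%E by apply: ereal_sup_ubound; exists k.
have := le_trans (Lnorm_ge0 _ _ _) (B_ub k0).
move: B B_ub => [beta||//] B_ub; rewrite ?lee_fin => beta_ge0; last first.
  by rewrite gt0_muley ?leey// lte_fin !mulr_gt0.
rewrite -EFinM; exact: Lnorm_mul_le_bound.
Qed.

End summing_inclusion.

Lemma hoelder_split_exponents {R : realType} [p1 p2 del : R] :
  0 < p1 -> p1 <= p2 -> 0 < del -> p1^-1 - p2^-1 <= del ->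
  exists t p' : R, [/\ 0 < t, 0 < p', t^-1 + p'^-1 = p1^-1, del^-1 <= t & p2 <= p'].
Proof.
move=> p1_gt0 p12 del_gt0 hdel.
have p2_gt0 : 0 < p2 by exact: lt_le_trans p12.
have p21 : p2^-1 <= p1^-1 by rewrite lef_pV2 ?posrE.
have ip2_gt0 : 0 < p2^-1 by rewrite invr_gt0.
pose x := minr del (p1^-1 - p2^-1 / 2).
have x_gt0 : 0 < x by rewrite lt_min del_gt0 /=; lra.
have x_lt : x < p1^-1 by rewrite gt_min; apply/orP; right; lra.
have x_ge : p1^-1 - p2^-1 <= x by rewrite le_min hdel /=; lra.
exists x^-1, (p1^-1 - x)^-1; split.
- by rewrite invr_gt0.
- by rewrite invr_gt0 subr_gt0.
- by rewrite !invrK addrC subrK.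
- by rewrite lef_pV2 ?posrE// ge_min lexx.
- by rewrite -[p2]invrK lef_pV2 ?posrE ?invr_gt0 ?subr_gt0//; lra.
Qed.


Section RS_summing_homogeneous.
Context {R : realType} {X : lmodType R} {Y K : Type} {d} {T : measurableType d}.
Context {nu : {measure set T -> \bar R}} {H : set (T -> X)} {F : set (X -> Y)}.
Context {S : (X -> Y) -> (T -> X) -> T -> R} {Rm : (T -> X) -> K -> T -> R}.
Local Notation "''N_' r [ f ]" := (Lnorm nu r%:E (EFin \o f%R)).

Lemma RS_summingE {q p : R} {u : X -> Y} :
  (forall (a : R) f, F u -> H f -> forall w, `|a * S u f w| = `|S u (a *: f) w|) ->
  (forall (a : R) f k, H f -> forall w, `|a * Rm f k w| = `|Rm (a *: f) k w|) ->
  RS_summing nu H F S Rm q p u <->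
  F u /\ exists C : R, 0 < C /\ forall f g, H f -> in_Lq nu q g ->
    ('N_q[g \* S u f] <= C%:E * ereal_sup [set 'N_p[g \* Rm f k] | k in [set: K]])%E.
Proof.
move=> hS hR.
suff eq_summing f g : F u -> H f ->
    'N_q[(fun w => S u (g w *: f) w)] = 'N_q[g \* S u f] /\
    [set 'N_p[(fun w => Rm (g w *: f) k w)] | k in [set: K]] =
    [set 'N_p[g \* Rm f k] | k in [set: K]].
  split=> -[Fu [C [C_gt0 summing]]]; split=> //; exists C; split=> // f g Hf Lg;
    have [eqS eqR] := eq_summing f g Fu Hf.
  - by rewrite -eqS -eqR; exact: summing.
  - by rewrite eqS eqR; exact: summing.
move=> Fu Hf; split; first by apply: eq_Lnorm_abs => w; rewrite -hS.
by apply: eq_imagel => k _; apply: eq_Lnorm_abs => w; rewrite -hR.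
Qed.

End RS_summing_homogeneous.

Theorem theorem3p2 (R : realType) (Y : Type) (X : lmodType R)
  (K : topologicalType) (d : measure_display) (T : measurableType d)
  (nu : {measure set T -> \bar R})
  (H : set (T -> X)) (F : set (X -> Y))
  (S : (X -> Y) -> (T -> X) -> T -> R) (Rm : (T -> X) -> K -> T -> R)
  (p1 p2 q1 q2 : R) :
  compact [set: K] ->
  (forall (a : R) (f : T -> X), H f -> H (a *: f)) ->
  (forall u f, F u -> H f -> measurable_fun [set: T] (S u f)) ->
  (forall f k, H f -> measurable_fun [set: T] (Rm f k)) ->
  (forall (a : R) u f, F u -> H f ->
     forall w, `|a * S u f w| = `|S u (a *: f) w|) ->
  (forall (a : R) f k, H f ->
     forall w, `|a * Rm f k w| = `|Rm (a *: f) k w|) ->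
  (forall r s : R, 1 <= r -> r < s ->
     exists C : R, forall h : T -> R, measurable_fun [set: T] h ->
       (Lnorm nu s%:E (EFin \o h) <= C%:E * Lnorm nu r%:E (EFin \o h))%E) ->
  1 <= p1 -> p1 <= p2 -> 1 <= q1 -> q1 <= q2 ->
  p1^-1 - p2^-1 <= q1^-1 - q2^-1 ->
  RS nu H F S Rm q1 p1 `<=` RS nu H F S Rm q2 p2.
Proof.
move=> _ _ mS mR hS hR dom p1_ge1 p12 q1_ge1 q12 hpq u.
have [p1_gt0 q1_gt0] : 0 < p1 /\ 0 < q1 by split; lra.
move=> /(RS_summingE (hS^~ u) hR) [Fu [C [C_gt0 summing1]]].
apply/(RS_summingE (hS^~ u) hR); split=> //.
move: q12; rewrite le_eqVlt => /predU1P[q1q2|q1_lt_q2].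
  have p1p2 : p1 = p2.
    move: hpq; rewrite q1q2 subrr subr_le0 lef_pV2 ?posrE; [lra|lra|lra].
  by rewrite -q1q2 -p1p2; exists C.
have del_gt0 : 0 < q1^-1 - q2^-1 by rewrite subr_gt0 ltf_pV2 ?posrE//; lra.
have [t [p' [t_gt0 p'_gt0 tp' s_le_t p2_le_p']]] :=
  hoelder_split_exponents p1_gt0 p12 del_gt0 hpq.
have s_ge1 : 1 <= (q1^-1 - q2^-1)^-1.
  have q1V_le1 : q1^-1 <= 1 by rewrite invf_le1; lra.
  have q2V_gt0 : 0 < q2^-1 by rewrite invr_gt0; lra.
  by rewrite invf_ge1//; lra.
have [C1 C1_gt0 dom1] := Lnorm_dominated_le nu dom s_ge1 s_le_t.
have [C2 C2_gt0 dom2] := Lnorm_dominated_le nu dom (le_trans p1_ge1 p12) p2_le_p'.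
exists (C * C1 * C2); split=> [|f g Hf]; first by rewrite !mulr_gt0.
exact: (Lnorm_mul_le_sup nu q1_gt0 q1_lt_q2 p1_gt0 t_gt0 p'_gt0 tp' C_gt0 C1_gt0 C2_gt0 (mS u f Fu Hf) (fun k => mR f k Hf)
  (fun g => summing1 f g Hf) dom1 dom2).
Qed.
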